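(* Let $I\subseteq\mathbb{R}$ be an interval, $f:I\to\mathbb{R}$ differentiable on the interior $I^\circ$, and $a,b\in I^\circ$ with $a<b$, $f'\in L[a,b]$. Let $g:[a,b]\to\mathbb{R}$ be continuous and $\alpha>0$. If $|f'|$ is convex on $[a,b]$, then, with $m=\frac{a+b}{2}$, $$\left|f(m)\left[J^{\alpha}_{m-}g(a)+J^{\alpha}_{m+}g(b)\right]-\left[J^{\alpha}_{m-}(fg)(a)+J^{\alpha}_{m+}(fg)(b)\right]\right|\le \frac{(b-a)^{\alpha+1}\,\|g\|_{[a,b],\infty}}{2^{\alpha+1}(\alpha+1)\Gamma(\alpha+1)}\left(|f'(a)|+|f'(b)|\right).$$
   Context: For $\alpha>0$ and an integrable function $h$, the Riemann–Liouville fractional integrals are $J^{\alpha}_{c+}h(x)=\frac{1}{\Gamma(\alpha)}\int_c^x (x-t)^{\alpha-1}h(t)\,dt$ for $x>c$, and $J^{\alpha}_{c-}h(x)=\frac{1}{\Gamma(\alpha)}\int_x^c (t-x)^{\alpha-1}h(t)\,dt$ for $x<c$, where $\Gamma$ is the Gamma function. Thus, with $m=\frac{a+b}{2}$, $J^{\alpha}_{m-}h(a)=\frac{1}{\Gamma(\alpha)}\int_a^{m}(t-a)^{\alpha-1}h(t)\,dt$ and $J^{\alpha}_{m+}h(b)=\frac{1}{\Gamma(\alpha)}\int_{m}^{b}(b-t)^{\alpha-1}h(t)\,dt$. Here $fg$ denotes the pointwise product. For a continuous $g$ and an interval $[c,d]$, $\|g\|_{[c,d],\infty}=\sup_{x\in[c,d]}|g(x)|$.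 *)

From Stdlib Require Import Reals Lra ClassicalEpsilon.
Open Scope R_scope.

Definition is_RInt (f : R -> R) (a b v : R) : Prop :=
  exists pr : Riemann_integrable f a b, RiemannInt pr = v.

Definition is_Gamma (x v : R) : Prop :=
  forall eps, 0 < eps -> exists delta M0, 0 < delta /\
    forall e M, 0 < e < delta -> M0 < M ->
      exists w, is_RInt (fun t => Rpower t (x - 1) * exp (- t)) e M w /\
                Rabs (w - v) < eps.

Definition Gamma (x : R) : R := epsilon (inhabits 0) (is_Gamma x).

(* \int_x^c (t-x)^(al-1) h(t) dt  (x < c), improper at t = x *)
Definition is_RL_left_int (al : R) (h : R -> R) (c x v : R) : Prop :=
  forall eps, 0 < eps -> exists delta, 0 < delta /\
    forall e, 0 < e < delta ->
      exists w, is_RInt (fun t => Rpower (t - x) (al - 1) * h t) (x + e) c w /\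
                Rabs (w - v) < eps.

(* \int_c^x (x-t)^(al-1) h(t) dt  (c < x), improper at t = x *)
Definition is_RL_right_int (al : R) (h : R -> R) (c x v : R) : Prop :=
  forall eps, 0 < eps -> exists delta, 0 < delta /\
    forall e, 0 < e < delta ->
      exists w, is_RInt (fun t => Rpower (x - t) (al - 1) * h t) c (x - e) w /\
                Rabs (w - v) < eps.

(* Riemann-Liouville fractional integrals J^al_{c-} h (x) and J^al_{c+} h (x) *)
Definition RL_left (al : R) (h : R -> R) (c x : R) : R :=
  / Gamma al * epsilon (inhabits 0) (is_RL_left_int al h c x).

Definition RL_right (al : R) (h : R -> R) (c x : R) : R :=
  / Gamma al * epsilon (inhabits 0) (is_RL_right_int al h c x).

Definition sup_norm (g : R -> R) (a b : R) : R :=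
  epsilon (inhabits 0)
    (is_lub (fun y => exists x, a <= x <= b /\ y = Rabs (g x))).

Definition is_interval (I : R -> Prop) : Prop :=
  forall x y z, I x -> I z -> x <= y <= z -> I y.

Definition convex_on (h : R -> R) (a b : R) : Prop :=
  forall x y t, a <= x <= b -> a <= y <= b -> 0 <= t <= 1 ->
    h (t * x + (1 - t) * y) <= t * h x + (1 - t) * h y.

Definition continuous_on (g : R -> R) (a b : R) : Prop :=
  forall x, a <= x <= b -> continue_in g (fun y => a <= y <= b) x.

(* Convexity bounds |f'| on [a, b] by its chord, so on the left half |f(m) - f(t)| is at most the
   integral of that chord from t to m, a quadratic in t - a; against the kernel (t - a)^(al-1) it
   integrates in closed form. Multiplying by sup |g| bounds the left half of the difference; the
   right half follows by the reflection t |-> a + b - t, which swaps |f'(a)| and |f'(b)|. In the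
   sum the quadratic terms cancel, leaving (|f'(a)| + |f'(b)|) h^(al+1) / (al (al+1)) with
   h = (b - a)/2, and al Gamma(al) = Gamma(al + 1) gives the stated constant. The fractional
   integrals are improper at the endpoint; their existence comes from a Cauchy bound of order
   e^al, and the estimate passes to the limit. *)

From Pilot Require Import Defs.
From Stdlib Require Import Reals Lra Lia ClassicalEpsilon.
From Coquelicot Require Import Coquelicot.
Open Scope R_scope.

Lemma Defs_is_RInt_of_is_RInt f a b v : is_RInt f a b v -> Defs.is_RInt f a b v.
Proof.
  intros H. assert (E : ex_RInt f a b) by (exists v; exact H).
  exists (ex_RInt_Reals_0 f a b E). rewrite <- RInt_Reals. now apply is_RInt_unique.
Qed.

Lemma is_RInt_of_Defs_is_RInt f a b v : Defs.is_RInt f a b v -> is_RInt f a b v.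
Proof.
  intros [pr <-]. rewrite <- (RInt_Reals f a b pr).
  apply (RInt_correct (V := R_CompleteNormedModule)), ex_RInt_Reals_1, pr.
Qed.

Lemma Defs_is_RInt_unique f a b v w : Defs.is_RInt f a b v -> Defs.is_RInt f a b w -> v = w.
Proof.
  intros Hv%is_RInt_of_Defs_is_RInt Hw%is_RInt_of_Defs_is_RInt.
  now rewrite <- (is_RInt_unique _ _ _ _ Hv), <- (is_RInt_unique _ _ _ _ Hw).
Qed.

Lemma eq_of_common_approx v1 v2 :
  (forall eps, 0 < eps -> exists w, Rabs (w - v1) < eps /\ Rabs (w - v2) < eps) -> v1 = v2.
Proof.
  intros H. destruct (Req_dec v1 v2) as [E|E]; auto.
  assert (Hd : 0 < Rabs (v1 - v2)) by (apply Rabs_pos_lt; lra).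
  destruct (H (Rabs (v1 - v2) / 2)) as [w [H1 H2]]; [lra|].
  exfalso. revert H1 H2. split_Rabs; lra.
Qed.

Lemma continuity_pt_of_derivable_pt_lim f x l : derivable_pt_lim f x l -> continuity_pt f x.
Proof. intros H. apply derivable_continuous_pt. now exists l. Qed.

Lemma is_RInt_derive_le f df a b : a <= b ->
  (forall x, a <= x <= b -> derivable_pt_lim f x (df x)) ->
  (forall x, a <= x <= b -> continuity_pt df x) ->
  is_RInt df a b (f b - f a).
Proof.
  intros Hab Hf Hdf. apply (is_RInt_derive f df); rewrite Rmin_left, Rmax_right by lra.
  - intros x Hx. now apply is_derive_Reals, Hf.
  - intros x Hx. now apply continuity_pt_filterlim, Hdf.
Qed.

Lemma ex_RInt_continuity_pt f u v : u <= v ->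
  (forall z, u <= z <= v -> continuity_pt f z) -> ex_RInt f u v.
Proof.
  intros Huv H. apply (ex_RInt_continuous (V := R_CompleteNormedModule)).
  rewrite Rmin_left, Rmax_right by lra. intros z Hz. now apply continuity_pt_filterlim, H.
Qed.

Lemma RInt_Chasles_R f a b c : ex_RInt f a b -> ex_RInt f b c ->
  RInt f a c = RInt f a b + RInt f b c.
Proof. intros H1 H2. now rewrite <- (RInt_Chasles f a b c H1 H2). Qed.

Lemma Rabs_is_RInt_le f g u v I J : u <= v -> is_RInt f u v I -> is_RInt g u v J ->
  (forall x, u < x < v -> Rabs (f x) <= g x) -> Rabs I <= J.
Proof.
  intros Huv Hf Hg H.
  assert (I <= J).
  { apply (is_RInt_le f g u v I J Huv Hf Hg). intros x Hx. specialize (H x Hx). revert H. split_Rabs; lra. }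
  assert (- J <= I).
  { apply (is_RInt_le (fun y => - g y) f u v (- J) I Huv); auto.
    - apply (is_RInt_opp (V := R_NormedModule)), Hg.
    - intros x Hx. specialize (H x Hx). revert H. split_Rabs; lra. }
  split_Rabs; lra.
Qed.

Lemma Rpower_pos x y : 0 < Rpower x y.
Proof. apply exp_pos. Qed.

Lemma derivable_pt_lim_Rpower_shift c s t : c < t ->
  derivable_pt_lim (fun x => Rpower (x - c) s) t (s * Rpower (t - c) (s - 1)).
Proof.
  intros H. replace (s * Rpower (t - c) (s - 1)) with (s * Rpower (t - c) (s - 1) * (1 - 0)) by ring.
  apply (derivable_pt_lim_comp (fun x => x - c) (fun y => Rpower y s)).
  - apply derivable_pt_lim_minus; [apply derivable_pt_lim_id | apply derivable_pt_lim_const].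
  - apply derivable_pt_lim_power; lra.
Qed.

Lemma is_RInt_Rpower_shift c s u v : 0 < s -> c < u -> u <= v ->
  is_RInt (fun t => Rpower (t - c) (s - 1)) u v ((Rpower (v - c) s - Rpower (u - c) s) / s).
Proof.
  intros Hs Hu Hv.
  replace ((Rpower (v - c) s - Rpower (u - c) s) / s)
    with (/ s * Rpower (v - c) s - / s * Rpower (u - c) s) by (field; lra).
  apply (is_RInt_derive_le (fun t => / s * Rpower (t - c) s)); auto.
  - intros x Hx. replace (Rpower (x - c) (s - 1)) with (/ s * (s * Rpower (x - c) (s - 1))) by (field; lra).
    apply derivable_pt_lim_scal, derivable_pt_lim_Rpower_shift; lra.
  - intros x Hx. eapply continuity_pt_of_derivable_pt_lim, derivable_pt_lim_Rpower_shift; lra.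
Qed.

Lemma Rpower_small s eps : 0 < s -> 0 < eps ->
  exists d, 0 < d /\ forall y, 0 < y < d -> Rpower y s < eps.
Proof.
  intros Hs He. exists (Rpower eps (/ s)). split; [apply Rpower_pos|].
  intros y Hy. replace eps with (Rpower (Rpower eps (/ s)) s).
  - apply Rlt_Rpower_l; lra.
  - rewrite Rpower_mult, Rinv_l, Rpower_1; lra.
Qed.

Lemma Rabs_increment_le f df P dP y z : y <= z ->
  (forall t, y <= t <= z -> derivable_pt_lim f t (df t)) ->
  (forall t, y <= t <= z -> derivable_pt_lim P t (dP t)) ->
  (forall t, y < t < z -> Rabs (df t) <= dP t) ->
  Rabs (f z - f y) <= P z - P y.
Proof.
  intros Hyz Hf HP Hd. destruct (Req_dec y z) as [<-|Hne].
  { rewrite !Rminus_diag, Rabs_R0. lra. }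
  destruct (MVT_cor2 (fun t => P t - f t) (fun t => dP t - df t) y z) as [c [Hc1 Hc2]]; [lra| |].
  { intros c Hc. apply derivable_pt_lim_minus; auto. }
  destruct (MVT_cor2 (fun t => P t + f t) (fun t => dP t + df t) y z) as [d [Hd1 Hd2]]; [lra| |].
  { intros d Hd'. apply derivable_pt_lim_plus; auto. }
  specialize (Hd c Hc2) as Hdc. specialize (Hd d Hd2) as Hdd.
  assert (0 <= (dP c - df c) * (z - y)) by (apply Rmult_le_pos; revert Hdc; split_Rabs; lra).
  assert (0 <= (dP d + df d) * (z - y)) by (apply Rmult_le_pos; revert Hdd; split_Rabs; lra).
  split_Rabs; lra.
Qed.

Definition is_lim_0plus (F : R -> R) (v : R) := forall eps, 0 < eps ->
  exists d, 0 < d /\ forall e, 0 < e < d -> Rabs (F e - v) < eps.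

Lemma ex_lim_0plus_Cauchy (F : R -> R) :
  (forall eps, 0 < eps -> exists d, 0 < d /\
     forall e1 e2, 0 < e1 < d -> 0 < e2 < d -> Rabs (F e1 - F e2) < eps) ->
  exists v, is_lim_0plus F v.
Proof.
  intros HC.
  assert (Hinv : forall d, 0 < d -> exists N, forall n, (N <= n)%nat -> 0 < / (INR n + 1) < d).
  { intros d Hd. destruct (archimed_cor1 d Hd) as [N [HN HN0]]. exists N. intros n Hn.
    assert (0 < INR N <= INR n) by (split; [apply lt_0_INR | apply le_INR]; lia).
    split; [apply Rinv_0_lt_compat; lra|].
    apply Rlt_trans with (/ INR N); auto. apply Rinv_lt_contravar; nra. }
  set (u n := F (/ (INR n + 1))).
  destruct (Rcomplete.R_complete u) as [v Hv].
  { intros eps He. destruct (HC eps He) as [d [Hd H]]. destruct (Hinv d Hd) as [N HN].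
    exists N. intros n m Hn Hm. apply H; auto. }
  exists v. intros eps He. destruct (HC (eps / 2)) as [d [Hd H]]; [lra|].
  exists d. split; auto. intros e He'.
  destruct (Hv (eps / 2)) as [N1 HN1]; [lra|]. destruct (Hinv d Hd) as [N2 HN2].
  specialize (HN1 (N1 + N2)%nat ltac:(lia)). unfold R_dist, u in HN1.
  specialize (H e _ He' (HN2 (N1 + N2)%nat ltac:(lia))). revert H HN1. split_Rabs; lra.
Qed.

Lemma ex_lim_0plus_Rpower_modulus F C s d0 : 0 <= C -> 0 < s -> 0 < d0 ->
  (forall e1 e2, 0 < e1 <= e2 -> e2 < d0 -> Rabs (F e1 - F e2) <= C * Rpower e2 s) ->
  exists v, is_lim_0plus F v.
Proof.
  intros HC Hs Hd0 HB. apply ex_lim_0plus_Cauchy. intros eps He.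
  destruct (Rpower_small s (eps / (C + 1)) Hs) as [d [Hd K]]; [apply Rdiv_lt_0_compat; lra|].
  exists (Rmin d d0). split; [now apply Rmin_pos|].
  assert (Rmin d d0 <= d) by apply Rmin_l. assert (Rmin d d0 <= d0) by apply Rmin_r.
  assert (Key : forall y, 0 < y < Rmin d d0 -> C * Rpower y s < eps).
  { intros y Hy. assert (Rpower y s < eps / (C + 1)) by (apply K; lra).
    assert (0 < Rpower y s) by apply Rpower_pos.
    apply Rle_lt_trans with ((C + 1) * Rpower y s); [nra|].
    replace eps with ((C + 1) * (eps / (C + 1))) by (field; lra). apply Rmult_lt_compat_l; lra. }
  intros e1 e2 H1 H2. destruct (Rle_dec e1 e2).
  - eapply Rle_lt_trans; [apply HB; lra | apply Key; lra].
  - rewrite Rabs_minus_sym. eapply Rle_lt_trans; [apply HB; lra | apply Key; lra].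
Qed.

Lemma is_lim_0plus_Rabs_le p q P Q d0 : 0 < d0 ->
  (forall e, 0 < e < d0 -> Rabs (p e) <= q e) ->
  is_lim_0plus p P -> is_lim_0plus q Q -> Rabs P <= Q.
Proof.
  intros Hd0 H HP HQ. apply Rnot_lt_le. intros Hlt.
  destruct (HP ((Rabs P - Q) / 3)) as [d1 [Hd1 K1]]; [lra|].
  destruct (HQ ((Rabs P - Q) / 3)) as [d2 [Hd2 K2]]; [lra|].
  set (e := Rmin d0 (Rmin d1 d2) / 2).
  assert (0 < Rmin d0 (Rmin d1 d2)) by (repeat apply Rmin_pos; auto).
  assert (Rmin d0 (Rmin d1 d2) <= d0) by apply Rmin_l.
  assert (Rmin d0 (Rmin d1 d2) <= d1) by (eapply Rle_trans; [apply Rmin_r | apply Rmin_l]).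
  assert (Rmin d0 (Rmin d1 d2) <= d2) by (eapply Rle_trans; [apply Rmin_r | apply Rmin_r]).
  specialize (K1 e ltac:(unfold e; lra)). specialize (K2 e ltac:(unfold e; lra)).
  specialize (H e ltac:(unfold e; lra)). revert K1 K2 H. split_Rabs; lra.
Qed.

Lemma eq_of_lim_0plus F v w : is_lim_0plus F v -> is_lim_0plus F w -> v = w.
Proof.
  intros Hv Hw. apply eq_of_common_approx. intros eps He.
  destruct (Hv eps He) as [d1 [Hd1 K1]]. destruct (Hw eps He) as [d2 [Hd2 K2]].
  assert (0 < Rmin d1 d2) by now apply Rmin_pos.
  assert (Rmin d1 d2 <= d1) by apply Rmin_l. assert (Rmin d1 d2 <= d2) by apply Rmin_r.
  exists (F (Rmin d1 d2 / 2)). split; [apply K1 | apply K2]; lra.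
Qed.

Lemma is_lim_0plus_const c : is_lim_0plus (fun _ => c) c.
Proof. intros eps He. exists 1. split; [lra|]. intros. rewrite Rminus_diag, Rabs_R0; lra. Qed.

Lemma is_lim_0plus_plus F G v w :
  is_lim_0plus F v -> is_lim_0plus G w -> is_lim_0plus (fun e => F e + G e) (v + w).
Proof.
  intros H1 H2 eps He.
  destruct (H1 (eps / 2)) as [d1 [Hd1 K1]]; [lra|]. destruct (H2 (eps / 2)) as [d2 [Hd2 K2]]; [lra|].
  exists (Rmin d1 d2). split; [now apply Rmin_pos|]. intros e He'.
  assert (Rmin d1 d2 <= d1) by apply Rmin_l. assert (Rmin d1 d2 <= d2) by apply Rmin_r.
  specialize (K1 e ltac:(lra)). specialize (K2 e ltac:(lra)). revert K1 K2. split_Rabs; lra.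
Qed.

Lemma is_lim_0plus_scal c F v : is_lim_0plus F v -> is_lim_0plus (fun e => c * F e) (c * v).
Proof.
  intros H eps He. assert (0 <= Rabs c) by apply Rabs_pos.
  destruct (H (eps / (Rabs c + 1))) as [d [Hd K]]; [apply Rdiv_lt_0_compat; lra|].
  exists d. split; auto. intros e He'. specialize (K e He').
  rewrite <- Rmult_minus_distr_l, Rabs_mult.
  apply Rle_lt_trans with (Rabs c * (eps / (Rabs c + 1))); [apply Rmult_le_compat_l; lra|].
  apply (Rmult_lt_reg_r (Rabs c + 1)); [lra|]. field_simplify; nra.
Qed.

Lemma is_lim_0plus_minus F G v w :
  is_lim_0plus F v -> is_lim_0plus G w -> is_lim_0plus (fun e => F e - G e) (v - w).
Proof.
  intros H1 H2. apply (is_lim_0plus_scal (-1)) in H2.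
  replace (v - w) with (v + -1 * w) by ring.
  intros eps He. destruct (is_lim_0plus_plus _ _ _ _ H1 H2 eps He) as [d [Hd K]].
  exists d. split; auto. intros e He'. specialize (K e He'). now replace (F e - G e) with (F e + -1 * G e) by ring.
Qed.

Lemma is_lim_0plus_ext_loc F G v d : 0 < d -> (forall e, 0 < e < d -> F e = G e) ->
  is_lim_0plus F v -> is_lim_0plus G v.
Proof.
  intros Hd E H eps He. destruct (H eps He) as [d1 [Hd1 K]].
  exists (Rmin d d1). split; [now apply Rmin_pos|]. intros e He'.
  assert (Rmin d d1 <= d) by apply Rmin_l. assert (Rmin d d1 <= d1) by apply Rmin_r.
  rewrite <- E by lra. apply K. lra.
Qed.

Lemma is_lim_0plus_squeeze F G d : 0 < d ->
  (forall e, 0 < e < d -> 0 <= F e <= G e) -> is_lim_0plus G 0 -> is_lim_0plus F 0.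
Proof.
  intros Hd HFG H eps He. destruct (H eps He) as [d1 [Hd1 K]].
  exists (Rmin d d1). split; [now apply Rmin_pos|]. intros e He'.
  assert (Rmin d d1 <= d) by apply Rmin_l. assert (Rmin d d1 <= d1) by apply Rmin_r.
  specialize (K e ltac:(lra)). specialize (HFG e ltac:(lra)). revert K. split_Rabs; lra.
Qed.

Lemma is_lim_0plus_Rpower s : 0 < s -> is_lim_0plus (fun e => Rpower e s) 0.
Proof.
  intros Hs eps He. destruct (Rpower_small s eps Hs He) as [d [Hd K]].
  exists d. split; auto. intros e He'. specialize (K e He').
  rewrite Rminus_0_r, Rabs_right by (left; apply Rpower_pos). exact K.
Qed.

Definition clamp (a b t : R) := Rmax a (Rmin b t).

Lemma clamp_in a b t : a <= b -> a <= clamp a b t <= b.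
Proof. intros H. unfold clamp, Rmax, Rmin. repeat destruct Rle_dec; lra. Qed.

Lemma clamp_id a b t : a <= t <= b -> clamp a b t = t.
Proof. intros H. unfold clamp, Rmax, Rmin. repeat destruct Rle_dec; lra. Qed.

Lemma clamp_1_Lipschitz a b x y : a <= b -> Rabs (clamp a b x - clamp a b y) <= Rabs (x - y).
Proof. intros H. unfold clamp, Rmax, Rmin. repeat destruct Rle_dec; split_Rabs; lra. Qed.

Lemma continuity_pt_clamp_comp h a b : a <= b -> Defs.continuous_on h a b ->
  forall t, continuity_pt (fun x => h (clamp a b x)) t.
Proof.
  intros Hab Hc t eps Heps.
  destruct (Hc (clamp a b t) (clamp_in a b t Hab) eps Heps) as [alp [Halp H]].
  exists alp. split; auto. intros x [_ Hx]. simpl in *. unfold R_dist in *.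
  destruct (Req_dec (clamp a b x) (clamp a b t)) as [E|E].
  - rewrite E, Rminus_diag, Rabs_R0. lra.
  - apply H. split; [split; [apply clamp_in; auto | auto]|].
    simpl. unfold R_dist. eapply Rle_lt_trans; [apply clamp_1_Lipschitz | ]; auto.
Qed.

Lemma continuous_on_extend h a b : a <= b -> Defs.continuous_on h a b ->
  exists H, (forall t, continuity_pt H t) /\ forall t, a <= t <= b -> h t = H t.
Proof.
  intros Hab Hc. exists (fun x => h (clamp a b x)). split.
  - now apply continuity_pt_clamp_comp.
  - intros t Ht. now rewrite clamp_id.
Qed.

Lemma continuous_on_of_continuity_pt h a b :
  (forall x, a <= x <= b -> continuity_pt h x) -> Defs.continuous_on h a b.
Proof.
  intros H x Hx eps He. destruct (H x Hx eps He) as [alp [Ha K]]. exists alp. split; auto.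
  intros y [[Dy Hne] Hd]. apply K. repeat split; auto.
Qed.

Lemma interior_between I a b x : is_interval I -> interior I a -> interior I b ->
  a <= x <= b -> interior I x.
Proof.
  intros HI [d1 H1] [d2 H2] Hx.
  assert (P1 := cond_pos d1). assert (P2 := cond_pos d2).
  assert (Hd : 0 < Rmin d1 d2 / 2) by (assert (0 < Rmin d1 d2) by (apply Rmin_pos; auto); lra).
  exists (mkposreal _ Hd). intros y Hy. unfold disc in Hy. simpl in Hy.
  assert (Rmin d1 d2 <= d1) by apply Rmin_l. assert (Rmin d1 d2 <= d2) by apply Rmin_r.
  apply HI with (a - d1 / 2) (b + d2 / 2).
  - apply H1. unfold disc. split_Rabs; lra.
  - apply H2. unfold disc. split_Rabs; lra.
  - revert Hy. split_Rabs; lra.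
Qed.

Lemma Rabs_le_sup_norm g a b G : a <= b -> (forall t, continuity_pt G t) ->
  (forall t, a <= t <= b -> g t = G t) -> forall t, a <= t <= b -> Rabs (g t) <= sup_norm g a b.
Proof.
  intros Hab HG Hg t Ht.
  set (E y := exists x, a <= x <= b /\ y = Rabs (g x)).
  assert (Hex : exists s, is_lub E s).
  { destruct (continuity_ab_maj (fun t => Rabs (G t)) a b Hab) as [Mx [HM _]].
    { intros c _. apply (continuity_pt_comp G Rabs); auto. apply Rcontinuity_abs. }
    destruct (completeness E) as [s Hs].
    - exists (Rabs (G Mx)). intros y [x [Hx ->]]. rewrite Hg; auto.
    - exists (Rabs (g a)), a. split; auto; lra.
    - now exists s. }
  destruct (epsilon_spec (inhabits 0) _ Hex) as [Hub _]. apply Hub. now exists t.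
Qed.

Lemma convex_on_le_chord h a b : a < b -> convex_on h a b ->
  forall s, a <= s <= b -> h s <= ((b - s) * h a + (s - a) * h b) / (b - a).
Proof.
  intros Hab Hc s Hs.
  assert (Ht : 0 <= (b - s) / (b - a) <= 1).
  { split; [apply Rdiv_le_0_compat; lra|].
    apply (Rmult_le_reg_r (b - a)); [lra|]. unfold Rdiv. rewrite Rmult_assoc, Rinv_l; lra. }
  specialize (Hc a b _ ltac:(lra) ltac:(lra) Ht).
  replace ((b - s) / (b - a) * a + (1 - (b - s) / (b - a)) * b) with s in Hc by (field; lra).
  eapply Rle_trans; [exact Hc|]. right. field. lra.
Qed.

Definition gamma_integrand (x t : R) := Rpower t (x - 1) * exp (- t).

Lemma derivable_pt_lim_exp_opp t : derivable_pt_lim (fun u => exp (- u)) t (- exp (- t)).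
Proof.
  replace (- exp (- t)) with (exp (- t) * - 1) by ring.
  apply (derivable_pt_lim_comp Ropp exp).
  - apply derivable_pt_lim_opp, derivable_pt_lim_id.
  - apply derivable_pt_lim_exp.
Qed.

Lemma continuity_pt_gamma_integrand x t : 0 < t -> continuity_pt (gamma_integrand x) t.
Proof.
  intros Ht. apply continuity_pt_mult.
  - eapply continuity_pt_of_derivable_pt_lim, derivable_pt_lim_power, Ht.
  - eapply continuity_pt_of_derivable_pt_lim, derivable_pt_lim_exp_opp.
Qed.

Lemma ex_RInt_gamma_integrand x u v : 0 < u -> u <= v -> ex_RInt (gamma_integrand x) u v.
Proof.
  intros Hu Huv. apply ex_RInt_continuity_pt; auto.
  intros z Hz. apply continuity_pt_gamma_integrand. lra.
Qed.

Lemma gamma_integrand_pos x t : 0 < gamma_integrand x t.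
Proof. apply Rmult_lt_0_compat; [apply Rpower_pos | apply exp_pos]. Qed.

Lemma Rpower_mul_exp_opp_bounded y :
  exists C, 0 < C /\ forall t, 1 <= t -> Rpower t y * exp (- t) <= C.
Proof.
  destruct (INR_archimed 1 y) as [k Hk]; [lra|].
  exists (INR (Factorial.fact (S k))). split; [apply INR_fact_lt_0|]. intros t Ht.
  assert (Hpow : Rpower t y <= t ^ S k).
  { rewrite <- Rpower_pow by lra. apply Rle_Rpower; auto. rewrite S_INR. lra. }
  (* [exp t] dominates the single term [t^(k+1)/(k+1)!] of its Taylor series. *)
  assert (Hexp : t ^ S k / INR (Factorial.fact (S k)) <= exp t).
  { eapply Rle_trans; [|apply (exp_ge_taylor t (S k)); lra].
    rewrite tech5. enough (0 <= sum_f_R0 (fun n => t ^ n / INR (Factorial.fact n)) k) by lra.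
    apply cond_pos_sum. intros n. apply Rdiv_le_0_compat; [apply pow_le; lra | apply INR_fact_lt_0]. }
  assert (Hf := INR_fact_lt_0 (S k)). assert (0 < exp (- t)) by apply exp_pos.
  assert (Ee : exp t * exp (- t) = 1) by (rewrite <- exp_plus, Rplus_opp_r; apply exp_0).
  apply Rle_trans with (t ^ S k * exp (- t)); [apply Rmult_le_compat_r; lra|].
  apply (Rmult_le_compat_r (exp (- t))) in Hexp; [|lra].
  unfold Rdiv in Hexp. rewrite Rmult_assoc, (Rmult_comm (/ _)), <- Rmult_assoc, Ee in Hexp.
  apply (Rmult_le_reg_r (/ INR (Factorial.fact (S k)))); [now apply Rinv_0_lt_compat|].
  rewrite Rinv_r by lra. exact Hexp.
Qed.

Lemma ex_lim_0plus_gamma_head x : 0 < x ->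
  exists V, is_lim_0plus (fun e => RInt (gamma_integrand x) e 1) V.
Proof.
  intros Hx. apply (ex_lim_0plus_Rpower_modulus _ (/ x) x 1); try lra.
  { left. now apply Rinv_0_lt_compat. }
  intros e1 e2 He He2.
  rewrite (RInt_Chasles_R _ e1 e2 1) by (apply ex_RInt_gamma_integrand; lra).
  rewrite Rplus_minus_r.
  eapply Rle_trans.
  - apply (Rabs_is_RInt_le _ _ e1 e2 _ _ ltac:(lra)
      (RInt_correct _ _ _ (ex_RInt_gamma_integrand x e1 e2 ltac:(lra) ltac:(lra)))
      (is_RInt_Rpower_shift 0 x e1 e2 Hx ltac:(lra) ltac:(lra))).
    intros t Ht. unfold gamma_integrand. rewrite Rminus_0_r, Rabs_right by (apply Rle_ge, Rlt_le, gamma_integrand_pos).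
    assert (exp (- t) <= 1) by (rewrite <- exp_0; left; apply exp_increasing; lra).
    assert (0 < Rpower t (x - 1)) by apply Rpower_pos. nra.
  - rewrite !Rminus_0_r. assert (0 < Rpower e1 x) by apply Rpower_pos.
    unfold Rdiv. rewrite Rmult_comm. apply Rmult_le_compat_l; [left; now apply Rinv_0_lt_compat | lra].
Qed.

Lemma is_RInt_inv_sqr u v : 0 < u -> u <= v -> is_RInt (fun t => / (t * t)) u v (/ u - / v).
Proof.
  intros Hu Huv. replace (/ u - / v) with (- / v - - / u) by ring.
  apply (is_RInt_derive_le (fun t => - / t)); auto.
  - intros t Ht. apply is_derive_Reals. auto_derive; [lra | field; lra].
  - intros t Ht. apply (continuity_pt_of_derivable_pt_lim _ _ (- 2 / (t * t * t))), is_derive_Reals.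
    auto_derive; [nra | field; lra].
Qed.

Lemma ex_lim_0plus_gamma_tail x :
  exists V, is_lim_0plus (fun e => RInt (gamma_integrand x) 1 (/ e)) V.
Proof.
  destruct (Rpower_mul_exp_opp_bounded (x + 1)) as [C [HC HCb]].
  apply (ex_lim_0plus_Rpower_modulus _ C 1 1); try lra.
  intros e1 e2 He He2.
  assert (Hi : / e2 <= / e1) by (apply Rinv_le_contravar; lra).
  assert (Hi1 : 1 < / e2) by (rewrite <- Rinv_1; apply Rinv_lt_contravar; lra).
  rewrite (RInt_Chasles_R _ 1 (/ e2) (/ e1)) by (apply ex_RInt_gamma_integrand; lra).
  rewrite Rplus_minus_l.
  eapply Rle_trans.
  - apply (Rabs_is_RInt_le _ _ (/ e2) (/ e1) _ _ Hi
      (RInt_correct _ _ _ (ex_RInt_gamma_integrand x (/ e2) (/ e1) ltac:(lra) Hi))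
      (is_RInt_scal _ _ _ C _ (is_RInt_inv_sqr (/ e2) (/ e1) ltac:(lra) Hi))).
    intros t Ht. rewrite Rabs_right by (apply Rle_ge, Rlt_le, gamma_integrand_pos).
    specialize (HCb t ltac:(lra)). unfold gamma_integrand.
    replace (Rpower t (x + 1)) with (Rpower t (x - 1) * (t * t)) in HCb
      by (replace (x + 1) with (x - 1 + 1 + 1) by ring; rewrite !Rpower_plus, Rpower_1; lra).
    change (scal C (/ (t * t))) with (C * / (t * t)).
    apply (Rmult_le_reg_r (t * t)); [nra|]. replace (C * / (t * t) * (t * t)) with C by (field; nra). nra.
  - change (scal C (/ / e2 - / / e1)) with (C * (/ / e2 - / / e1)).
    rewrite !Rinv_inv, Rpower_1 by lra. nra.
Qed.

Lemma is_Gamma_of_lim x V1 V2 :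
  is_lim_0plus (fun e => RInt (gamma_integrand x) e 1) V1 ->
  is_lim_0plus (fun e => RInt (gamma_integrand x) 1 (/ e)) V2 ->
  is_Gamma x (V1 + V2).
Proof.
  intros H1 H2 eps He.
  destruct (H1 (eps / 2)) as [d1 [Hd1 K1]]; [lra|]. destruct (H2 (eps / 2)) as [d2 [Hd2 K2]]; [lra|].
  exists (Rmin d1 1), (Rmax 1 (/ d2)). split; [apply Rmin_pos; lra|].
  intros e M He' HM.
  assert (Rmin d1 1 <= d1) by apply Rmin_l. assert (Rmin d1 1 <= 1) by apply Rmin_r.
  assert (1 <= Rmax 1 (/ d2)) by apply Rmax_l. assert (/ d2 <= Rmax 1 (/ d2)) by apply Rmax_r.
  exists (RInt (gamma_integrand x) e M). split.
  - apply Defs_is_RInt_of_is_RInt, (RInt_correct (V := R_CompleteNormedModule)).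
    apply ex_RInt_gamma_integrand; lra.
  - rewrite (RInt_Chasles_R _ e 1 M) by (apply ex_RInt_gamma_integrand; lra).
    specialize (K1 e ltac:(lra)).
    assert (HiM : 0 < / M < d2).
    { split; [apply Rinv_0_lt_compat; lra|]. rewrite <- (Rinv_inv d2).
      apply Rinv_lt_contravar; [apply Rmult_lt_0_compat; [apply Rinv_0_lt_compat|]|]; lra. }
    specialize (K2 (/ M) HiM). rewrite Rinv_inv in K2. revert K1 K2. split_Rabs; lra.
Qed.

Lemma is_Gamma_unique x v1 v2 : is_Gamma x v1 -> is_Gamma x v2 -> v1 = v2.
Proof.
  intros H1 H2. apply eq_of_common_approx. intros eps He.
  destruct (H1 eps He) as [d1 [M1 [Hd1 K1]]]. destruct (H2 eps He) as [d2 [M2 [Hd2 K2]]].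
  set (e := Rmin d1 d2 / 2). set (M := Rmax M1 M2 + 1).
  assert (0 < Rmin d1 d2) by (apply Rmin_pos; auto).
  assert (Rmin d1 d2 <= d1) by apply Rmin_l. assert (Rmin d1 d2 <= d2) by apply Rmin_r.
  assert (M1 <= Rmax M1 M2) by apply Rmax_l. assert (M2 <= Rmax M1 M2) by apply Rmax_r.
  destruct (K1 e M ltac:(unfold e; lra) ltac:(unfold M; lra)) as [w1 [Hw1 L1]].
  destruct (K2 e M ltac:(unfold e; lra) ltac:(unfold M; lra)) as [w2 [Hw2 L2]].
  exists w1. rewrite (Defs_is_RInt_unique _ _ _ _ _ Hw1 Hw2) in L1 |- *. auto.
Qed.

Lemma Gamma_split x : 0 < x -> exists V1 V2,
  is_lim_0plus (fun e => RInt (gamma_integrand x) e 1) V1 /\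
  is_lim_0plus (fun e => RInt (gamma_integrand x) 1 (/ e)) V2 /\ Gamma x = V1 + V2.
Proof.
  intros Hx. destruct (ex_lim_0plus_gamma_head x Hx) as [V1 H1].
  destruct (ex_lim_0plus_gamma_tail x) as [V2 H2].
  exists V1, V2. repeat split; auto.
  apply (is_Gamma_unique x); [|now apply is_Gamma_of_lim].
  unfold Gamma. apply epsilon_spec. exists (V1 + V2). now apply is_Gamma_of_lim.
Qed.

Lemma Gamma_pos x : 0 < x -> 0 < Gamma x.
Proof.
  intros Hx. destruct (Gamma_split x Hx) as [V1 [V2 [H1 [H2 ->]]]].
  assert (Hc : 0 < RInt (gamma_integrand x) 1 2).
  { assert (E0 : RInt (fun _ => 0) 1 2 = 0) by (rewrite RInt_const; apply Rmult_0_r).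
    rewrite <- E0. apply (RInt_lt (fun _ => 0)); [lra| | |].
    - intros t Ht. apply continuity_pt_filterlim, continuity_pt_gamma_integrand. lra.
    - intros t _. apply continuity_pt_filterlim, continuity_pt_const. now intros u v.
    - intros t _. apply gamma_integrand_pos. }
  assert (HV1 : Rabs 0 <= V1).
  { apply (is_lim_0plus_Rabs_le (fun _ => 0) (fun e => RInt (gamma_integrand x) e 1) _ _ 1);
      [lra | | apply is_lim_0plus_const | exact H1].
    intros e He. rewrite Rabs_R0. apply RInt_ge_0; [lra | apply ex_RInt_gamma_integrand; lra |].
    intros t _. apply Rlt_le, gamma_integrand_pos. }
  assert (HV2 : Rabs (RInt (gamma_integrand x) 1 2) <= V2).
  { apply (is_lim_0plus_Rabs_le (fun _ => RInt (gamma_integrand x) 1 2)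
             (fun e => RInt (gamma_integrand x) 1 (/ e)) _ _ (/ 2));
      [lra | | apply is_lim_0plus_const | exact H2].
    intros e He. assert (2 < / e) by (rewrite <- (Rinv_inv 2); apply Rinv_lt_contravar; nra).
    rewrite Rabs_right, (RInt_Chasles_R _ 1 2 (/ e)) by (lra || apply ex_RInt_gamma_integrand; lra).
    enough (0 <= RInt (gamma_integrand x) 2 (/ e)) by lra.
    apply RInt_ge_0; [lra | apply ex_RInt_gamma_integrand; lra |].
    intros t _. apply Rlt_le, gamma_integrand_pos. }
  rewrite Rabs_R0 in HV1. rewrite Rabs_right in HV2; lra.
Qed.

Lemma is_RInt_gamma_integrand_succ x u v : 0 < u -> u <= v ->
  is_RInt (gamma_integrand (x + 1)) u v
    (Rpower u x * exp (- u) - Rpower v x * exp (- v) + x * RInt (gamma_integrand x) u v).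
Proof.
  intros Hu Huv.
  set (G t := - (Rpower t x * exp (- t))).
  set (dG t := Rpower t x * exp (- t) - x * gamma_integrand x t).
  assert (HG : is_RInt dG u v (G v - G u)).
  { apply is_RInt_derive_le; auto.
    - intros t Ht. unfold G, dG, gamma_integrand.
      replace (Rpower t x * exp (- t) - x * (Rpower t (x - 1) * exp (- t)))
        with (- (x * Rpower t (x - 1) * exp (- t) + Rpower t x * - exp (- t))) by ring.
      apply derivable_pt_lim_opp, (derivable_pt_lim_mult (fun t => Rpower t x) (fun t => exp (- t))).
      + apply derivable_pt_lim_power. lra.
      + apply derivable_pt_lim_exp_opp.
    - intros t Ht. unfold dG. apply continuity_pt_minus.
      + apply continuity_pt_mult.
        * eapply continuity_pt_of_derivable_pt_lim, derivable_pt_lim_power. lra.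
        * eapply continuity_pt_of_derivable_pt_lim, derivable_pt_lim_exp_opp.
      + apply continuity_pt_scal, continuity_pt_gamma_integrand. lra. }
  assert (J := is_RInt_plus _ _ _ _ _ _ HG
                 (is_RInt_scal _ _ _ x _ (RInt_correct _ _ _ (ex_RInt_gamma_integrand x u v Hu Huv)))).
  replace (Rpower u x * exp (- u) - Rpower v x * exp (- v) + x * RInt (gamma_integrand x) u v)
    with (G v - G u + x * RInt (gamma_integrand x) u v) by (unfold G; ring).
  apply (is_RInt_ext (fun t => dG t + x * gamma_integrand x t)); [|exact J].
  intros t _. change (dG t + x * gamma_integrand x t = gamma_integrand (x + 1) t).
  unfold dG, gamma_integrand. replace (x + 1 - 1) with x by ring. ring.
Qed.

Lemma Gamma_succ x : 0 < x -> Gamma (x + 1) = x * Gamma x.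
Proof.
  intros Hx. destruct (Gamma_split x Hx) as [V1 [V2 [H1 [H2 ->]]]].
  destruct (Gamma_split (x + 1) ltac:(lra)) as [W1 [W2 [K1 [K2 ->]]]].
  set (c := Rpower 1 x * exp (- 1)).
  assert (L1 : is_lim_0plus (fun e => Rpower e x * exp (- e)) 0).
  { apply (is_lim_0plus_squeeze _ (fun e => Rpower e x) 1); [lra| |now apply is_lim_0plus_Rpower].
    intros e He. assert (0 < Rpower e x) by apply Rpower_pos. assert (0 < exp (- e)) by apply exp_pos.
    assert (exp (- e) <= 1) by (rewrite <- exp_0; left; apply exp_increasing; lra). nra. }
  assert (L2 : is_lim_0plus (fun e => Rpower (/ e) x * exp (- / e)) 0).
  { destruct (Rpower_mul_exp_opp_bounded (x + 1)) as [C [HC HCb]].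
    apply (is_lim_0plus_squeeze _ (fun e => C * Rpower e 1) 1); [lra| |].
    - intros e He. assert (1 <= / e) by (rewrite <- Rinv_1; apply Rinv_le_contravar; lra).
      specialize (HCb (/ e) ltac:(lra)). rewrite Rpower_plus, Rpower_1 in HCb by lra. rewrite Rpower_1 by lra.
      assert (0 < Rpower (/ e) x) by apply Rpower_pos. assert (0 < exp (- / e)) by apply exp_pos.
      split; [nra|]. apply (Rmult_le_reg_r (/ e)); [lra|].
      replace (C * e * / e) with C by (field; lra). nra.
    - replace 0 with (C * 0) by ring. apply is_lim_0plus_scal, is_lim_0plus_Rpower. lra. }
  assert (E1 : W1 = 0 - c + x * V1).
  { apply (eq_of_lim_0plus (fun e => RInt (gamma_integrand (x + 1)) e 1)); auto.
    apply (is_lim_0plus_ext_loc (fun e => Rpower e x * exp (- e) - c + x * RInt (gamma_integrand x) e 1) _ _ 1);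
      [lra | | apply is_lim_0plus_plus; [apply is_lim_0plus_minus; [exact L1 | apply is_lim_0plus_const] | now apply is_lim_0plus_scal]].
    intros e He. symmetry. apply is_RInt_unique, is_RInt_gamma_integrand_succ; lra. }
  assert (E2 : W2 = c - 0 + x * V2).
  { apply (eq_of_lim_0plus (fun e => RInt (gamma_integrand (x + 1)) 1 (/ e))); auto.
    apply (is_lim_0plus_ext_loc (fun e => c - Rpower (/ e) x * exp (- / e) + x * RInt (gamma_integrand x) 1 (/ e)) _ _ 1);
      [lra | | apply is_lim_0plus_plus; [apply is_lim_0plus_minus; [apply is_lim_0plus_const | exact L2] | now apply is_lim_0plus_scal]].
    intros e He. assert (1 <= / e) by (rewrite <- Rinv_1; apply Rinv_le_contravar; lra).
    symmetry. apply is_RInt_unique, is_RInt_gamma_integrand_succ; lra. }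
  rewrite E1, E2. ring.
Qed.

Lemma ex_RInt_RL_left_kernel al a m h H e : (forall t, continuity_pt H t) ->
  (forall t, a <= t <= m -> h t = H t) -> 0 < e -> a + e <= m ->
  ex_RInt (fun t => Rpower (t - a) (al - 1) * h t) (a + e) m.
Proof.
  intros HH Hh He Hm. apply (ex_RInt_ext (fun t => Rpower (t - a) (al - 1) * H t)).
  - intros x Hx. rewrite Rmin_left, Rmax_right in Hx by lra. rewrite Hh by lra. reflexivity.
  - apply ex_RInt_continuity_pt; auto. intros z Hz. apply continuity_pt_mult; auto.
    eapply continuity_pt_of_derivable_pt_lim, derivable_pt_lim_Rpower_shift. lra.
Qed.

Lemma RL_left_int_exists al a m h H : 0 < al -> a < m ->
  (forall t, continuity_pt H t) -> (forall t, a <= t <= m -> h t = H t) ->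
  exists V, is_RL_left_int al h m a V /\
    is_lim_0plus (fun e => RInt (fun t => Rpower (t - a) (al - 1) * h t) (a + e) m) V.
Proof.
  intros Hal Ham HH Hh. set (phi t := Rpower (t - a) (al - 1) * h t).
  assert (Hex : forall e, 0 < e -> a + e <= m -> ex_RInt phi (a + e) m)
    by (intros; eapply ex_RInt_RL_left_kernel; eauto).
  destruct (continuity_ab_maj (fun t => Rabs (H t)) a m) as [Mx [HM _]]; [lra| |].
  { intros c _. apply (continuity_pt_comp H Rabs); auto. apply Rcontinuity_abs. }
  set (K := Rabs (H Mx)). assert (HK : 0 <= K) by apply Rabs_pos.
  destruct (ex_lim_0plus_Rpower_modulus (fun e => RInt phi (a + e) m) (K / al) al (m - a))
    as [V HV]; try lra.
  { apply Rdiv_le_0_compat; lra. }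
  { intros e1 e2 He He2.
    rewrite (RInt_Chasles_R phi (a + e1) (a + e2) m) by
      (apply (ex_RInt_Chasles_1 phi _ _ m); [lra | apply Hex; lra] || apply Hex; lra).
    rewrite Rplus_minus_r.
    assert (Hk := is_RInt_scal _ _ _ K _ (is_RInt_Rpower_shift a al (a + e1) (a + e2) Hal ltac:(lra) ltac:(lra))).
    eapply Rle_trans.
    - apply (Rabs_is_RInt_le phi _ (a + e1) (a + e2) _ _ ltac:(lra)
        (RInt_correct _ _ _ (ex_RInt_Chasles_1 phi (a + e1) (a + e2) m ltac:(lra) (Hex e1 ltac:(lra) ltac:(lra)))) Hk).
      intros x Hx. unfold phi. change (scal K (Rpower (x - a) (al - 1))) with (K * Rpower (x - a) (al - 1)).
      rewrite Rabs_mult, (Rabs_right (Rpower _ _)) by (left; apply Rpower_pos).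
      rewrite Hh, Rmult_comm by lra. apply Rmult_le_compat_r; [left; apply Rpower_pos | apply HM; lra].
    - change (scal K ((Rpower (a + e2 - a) al - Rpower (a + e1 - a) al) / al))
        with (K * ((Rpower (a + e2 - a) al - Rpower (a + e1 - a) al) / al)).
      replace (a + e2 - a) with e2 by ring. replace (a + e1 - a) with e1 by ring.
      assert (0 < Rpower e1 al) by apply Rpower_pos.
      apply (Rmult_le_reg_r al); [lra|]. field_simplify; [nra | lra | lra]. }
  exists V. split; [|exact HV].
  intros eps He. destruct (HV eps He) as [d [Hd K']].
  exists (Rmin d (m - a)). split; [apply Rmin_pos; lra|].
  assert (Rmin d (m - a) <= d) by apply Rmin_l. assert (Rmin d (m - a) <= m - a) by apply Rmin_r.
  intros e He'. exists (RInt phi (a + e) m). split.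
  - apply Defs_is_RInt_of_is_RInt, (RInt_correct (V := R_CompleteNormedModule)), Hex; lra.
  - apply K'. lra.
Qed.

Lemma is_RL_left_int_unique al h c x v1 v2 :
  is_RL_left_int al h c x v1 -> is_RL_left_int al h c x v2 -> v1 = v2.
Proof.
  intros H1 H2. apply eq_of_common_approx. intros eps He.
  destruct (H1 eps He) as [d1 [Hd1 K1]]. destruct (H2 eps He) as [d2 [Hd2 K2]].
  assert (0 < Rmin d1 d2) by now apply Rmin_pos.
  assert (Rmin d1 d2 <= d1) by apply Rmin_l. assert (Rmin d1 d2 <= d2) by apply Rmin_r.
  destruct (K1 (Rmin d1 d2 / 2) ltac:(lra)) as [w1 [Hw1 L1]].
  destruct (K2 (Rmin d1 d2 / 2) ltac:(lra)) as [w2 [Hw2 L2]].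
  exists w1. rewrite (Defs_is_RInt_unique _ _ _ _ _ Hw1 Hw2) in L1 |- *. auto.
Qed.

Lemma is_RL_right_int_unique al h c x v1 v2 :
  is_RL_right_int al h c x v1 -> is_RL_right_int al h c x v2 -> v1 = v2.
Proof.
  intros H1 H2. apply eq_of_common_approx. intros eps He.
  destruct (H1 eps He) as [d1 [Hd1 K1]]. destruct (H2 eps He) as [d2 [Hd2 K2]].
  assert (0 < Rmin d1 d2) by now apply Rmin_pos.
  assert (Rmin d1 d2 <= d1) by apply Rmin_l. assert (Rmin d1 d2 <= d2) by apply Rmin_r.
  destruct (K1 (Rmin d1 d2 / 2) ltac:(lra)) as [w1 [Hw1 L1]].
  destruct (K2 (Rmin d1 d2 / 2) ltac:(lra)) as [w2 [Hw2 L2]].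
  exists w1. rewrite (Defs_is_RInt_unique _ _ _ _ _ Hw1 Hw2) in L1 |- *. auto.
Qed.

Lemma RL_left_eq al h c x v : is_RL_left_int al h c x v -> RL_left al h c x = / Gamma al * v.
Proof.
  intros H. unfold RL_left. f_equal. apply (is_RL_left_int_unique al h c x); auto.
  apply epsilon_spec. now exists v.
Qed.

Lemma RL_right_eq al h c x v : is_RL_right_int al h c x v -> RL_right al h c x = / Gamma al * v.
Proof.
  intros H. unfold RL_right. f_equal. apply (is_RL_right_int_unique al h c x); auto.
  apply epsilon_spec. now exists v.
Qed.

Lemma is_RL_right_int_reflect al h a b v :
  is_RL_left_int al (fun t => h (a + b - t)) ((a + b) / 2) a v ->
  is_RL_right_int al h ((a + b) / 2) b v.
Proof.
  intros H eps He. destruct (H eps He) as [d [Hd H']]. exists d. split; auto.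
  intros e He'. destruct (H' e He') as [w [Hw Hwv]]. exists w. split; auto.
  set (m := (a + b) / 2) in *.
  apply is_RInt_of_Defs_is_RInt, is_RInt_swap in Hw.
  assert (Hc := is_RInt_comp_lin (fun t => Rpower (t - a) (al - 1) * h (a + b - t)) (-1) (a + b) m (b - e) (opp w)).
  replace (-1 * m + (a + b)) with m in Hc by (unfold m; field).
  replace (-1 * (b - e) + (a + b)) with (a + e) in Hc by ring.
  specialize (Hc Hw). apply is_RInt_opp in Hc. rewrite opp_opp in Hc.
  apply Defs_is_RInt_of_is_RInt. eapply is_RInt_ext; [|exact Hc].
  intros t _.
  change (- (-1 * (Rpower (-1 * t + (a + b) - a) (al - 1) * h (a + b - (-1 * t + (a + b)))))
          = Rpower (b - t) (al - 1) * h t).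
  replace (-1 * t + (a + b) - a) with (b - t) by ring.
  replace (a + b - (-1 * t + (a + b))) with t by ring. ring.
Qed.

(* With [h = (b - a) / 2] and [u = y - a], this is the integral from [y] to the midpoint of the
   chord [((b - s) A + (s - a) B) / (b - a)] bounding [|f'|]; it vanishes at [u = h]. *)
Definition conv_majorant (A B h u : R) :=
  (3 * A + B) * h / 4 - A * u + (A - B) / (4 * h) * (u * u).

(* [int_0^u t^(al-1) conv_majorant A B h t dt] *)
Definition majorant_moment (al A B h u : R) :=
  (3 * A + B) * h / 4 / al * Rpower u al - A / (al + 1) * Rpower u (al + 1)
  + (A - B) / (4 * h) / (al + 2) * Rpower u (al + 2).

Lemma Rpower_add1 u s : 0 < u -> Rpower u (s + 1) = Rpower u s * u.
Proof. intros Hu. now rewrite Rpower_plus, Rpower_1. Qed.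

Lemma is_RInt_majorant_moment al A B h a u v : 0 < al -> 0 < h -> 0 < u <= v ->
  is_RInt (fun t => Rpower (t - a) (al - 1) * conv_majorant A B h (t - a)) (a + u) (a + v)
    (majorant_moment al A B h v - majorant_moment al A B h u).
Proof.
  intros Hal Hh Huv.
  rewrite <- (Rplus_minus_l a v), <- (Rplus_minus_l a u) at 2.
  apply (is_RInt_derive_le (fun t => majorant_moment al A B h (t - a))); [lra| |].
  - intros t Ht. unfold majorant_moment.
    replace (Rpower (t - a) (al - 1) * conv_majorant A B h (t - a)) with
      ((3 * A + B) * h / 4 / al * (al * Rpower (t - a) (al - 1))
       - A / (al + 1) * ((al + 1) * Rpower (t - a) (al + 1 - 1))
       + (A - B) / (4 * h) / (al + 2) * ((al + 2) * Rpower (t - a) (al + 2 - 1))).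
    2:{ replace (al + 1 - 1) with (al - 1 + 1) by ring. replace (al + 2 - 1) with (al - 1 + 1 + 1) by ring.
        rewrite !Rpower_add1 by lra. unfold conv_majorant. field. lra. }
    apply derivable_pt_lim_plus; [apply derivable_pt_lim_minus|];
      apply derivable_pt_lim_scal, derivable_pt_lim_Rpower_shift; lra.
  - intros t Ht. apply continuity_pt_mult.
    + eapply continuity_pt_of_derivable_pt_lim, derivable_pt_lim_Rpower_shift. lra.
    + unfold conv_majorant. reg.
Qed.

Lemma is_lim_0plus_majorant_moment al A B h : 0 < al ->
  is_lim_0plus (majorant_moment al A B h) 0.
Proof.
  intros Hal. unfold majorant_moment.
  replace 0 with ((3 * A + B) * h / 4 / al * 0 - A / (al + 1) * 0 + (A - B) / (4 * h) / (al + 2) * 0) by ring.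
  apply is_lim_0plus_plus; [apply is_lim_0plus_minus|];
    apply is_lim_0plus_scal, is_lim_0plus_Rpower; lra.
Qed.

Lemma majorant_moment_sym_sum al A B h : 0 < al -> 0 < h ->
  majorant_moment al A B h h + majorant_moment al B A h h
  = (A + B) * Rpower h (al + 1) / (al * (al + 1)).
Proof.
  intros Hal Hh. unfold majorant_moment.
  replace (al + 2) with (al + 1 + 1) by ring. rewrite !Rpower_add1 by lra. field. lra.
Qed.

Section Left_half.

Variables (al a b : R) (f df g G : R -> R) (K A B : R).
Hypothesis Hal : 0 < al.
Hypothesis Hab : a < b.
Hypothesis Hf : forall x, a <= x <= b -> derivable_pt_lim f x (df x).
Hypothesis Hdf : forall s, a <= s <= b -> Rabs (df s) <= ((b - s) * A + (s - a) * B) / (b - a).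
Hypothesis HG : forall t, continuity_pt G t.
Hypothesis HgG : forall t, a <= t <= b -> g t = G t.
Hypothesis HgK : forall t, a <= t <= b -> Rabs (g t) <= K.

Let m := (a + b) / 2.
Let h := (b - a) / 2.

Lemma Rabs_sub_le_conv_majorant y : a <= y <= m ->
  Rabs (f m - f y) <= conv_majorant A B h (y - a).
Proof.
  intros Hy. unfold m, h in *.
  replace (conv_majorant A B ((b - a) / 2) (y - a))
    with (- conv_majorant A B ((b - a) / 2) ((a + b) / 2 - a) - - conv_majorant A B ((b - a) / 2) (y - a))
    by (unfold conv_majorant; field; lra).
  apply (Rabs_increment_le f df (fun t => - conv_majorant A B ((b - a) / 2) (t - a))
           (fun t => ((b - t) * A + (t - a) * B) / (b - a))); [lra | | |].
  - intros t Ht. apply Hf. lra.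
  - intros t Ht. unfold conv_majorant.
    apply is_derive_Reals. auto_derive; [lra | field; lra].
  - intros t Ht. apply Hdf. lra.
Qed.

Lemma RL_left_trunc_bound e : 0 < e < h ->
  ex_RInt (fun t => Rpower (t - a) (al - 1) * g t) (a + e) m ->
  ex_RInt (fun t => Rpower (t - a) (al - 1) * (f t * g t)) (a + e) m ->
  Rabs (f m * RInt (fun t => Rpower (t - a) (al - 1) * g t) (a + e) m
        - RInt (fun t => Rpower (t - a) (al - 1) * (f t * g t)) (a + e) m)
  <= K * (majorant_moment al A B h h - majorant_moment al A B h e).
Proof.
  intros He Eg Efg.
  assert (Hm : m = a + h) by (unfold m, h; field).
  assert (Hdiff := is_RInt_minus _ _ _ _ _ _
    (is_RInt_scal _ _ _ (f m) _ (RInt_correct _ _ _ Eg)) (RInt_correct _ _ _ Efg)).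
  assert (Hmaj := is_RInt_scal _ _ _ K _
    (is_RInt_majorant_moment al A B h a e h Hal ltac:(unfold h; lra) ltac:(lra))).
  rewrite <- Hm in Hmaj.
  apply (Rabs_is_RInt_le _ _ (a + e) m _ _ ltac:(unfold m, h in *; lra) Hdiff Hmaj).
  intros y Hy.
  change (Rabs (f m * (Rpower (y - a) (al - 1) * g y) - Rpower (y - a) (al - 1) * (f y * g y))
          <= K * (Rpower (y - a) (al - 1) * conv_majorant A B h (y - a))).
  assert (0 < Rpower (y - a) (al - 1)) by apply Rpower_pos.
  replace (f m * (Rpower (y - a) (al - 1) * g y) - Rpower (y - a) (al - 1) * (f y * g y))
    with (Rpower (y - a) (al - 1) * ((f m - f y) * g y)) by ring.
  rewrite Rabs_mult, Rabs_mult, (Rabs_right (Rpower _ _)) by lra.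
  replace (K * (Rpower (y - a) (al - 1) * conv_majorant A B h (y - a)))
    with (Rpower (y - a) (al - 1) * (conv_majorant A B h (y - a) * K)) by ring.
  apply Rmult_le_compat_l; [lra|]. apply Rmult_le_compat; try apply Rabs_pos.
  - apply Rabs_sub_le_conv_majorant. unfold m, h in *. lra.
  - apply HgK. unfold m, h in *. lra.
Qed.

Lemma RL_left_half_bound : exists Vg Vfg,
  is_RL_left_int al g m a Vg /\ is_RL_left_int al (fun t => f t * g t) m a Vfg /\
  Rabs (f m * Vg - Vfg) <= K * majorant_moment al A B h h.
Proof.
  assert (Ham : a < m) by (unfold m; lra).
  set (FG t := f (clamp a b t) * G t).
  assert (HFG : forall t, continuity_pt FG t).
  { intros t. apply continuity_pt_mult; auto. revert t.
    apply continuity_pt_clamp_comp; [lra|]. apply continuous_on_of_continuity_pt.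
    intros x Hx. eapply continuity_pt_of_derivable_pt_lim, Hf, Hx. }
  assert (Hg_m : forall t, a <= t <= m -> g t = G t) by (intros t Ht; apply HgG; unfold m in *; lra).
  assert (Hfg_m : forall t, a <= t <= m -> f t * g t = FG t).
  { intros t Ht. unfold FG. rewrite clamp_id, Hg_m; auto. unfold m in *. lra. }
  destruct (RL_left_int_exists al a m g G Hal Ham HG Hg_m) as [Vg [HVg Lg]].
  destruct (RL_left_int_exists al a m _ FG Hal Ham HFG Hfg_m) as [Vfg [HVfg Lfg]].
  exists Vg, Vfg. repeat split; auto.
  apply (is_lim_0plus_Rabs_le
    (fun e => f m * RInt (fun t => Rpower (t - a) (al - 1) * g t) (a + e) m
              - RInt (fun t => Rpower (t - a) (al - 1) * (f t * g t)) (a + e) m)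
    (fun e => K * (majorant_moment al A B h h - majorant_moment al A B h e)) _ _ h).
  - unfold h. lra.
  - intros e He. assert (a + e <= m) by (unfold m, h in *; lra).
    apply RL_left_trunc_bound; auto;
      [apply (ex_RInt_RL_left_kernel _ _ _ _ G) | apply (ex_RInt_RL_left_kernel _ _ _ _ FG)]; auto; lra.
  - apply is_lim_0plus_minus; [apply is_lim_0plus_scal|]; auto.
  - replace (K * majorant_moment al A B h h) with (K * (majorant_moment al A B h h - 0)) by ring.
    apply is_lim_0plus_scal, is_lim_0plus_minus;
      [apply is_lim_0plus_const | now apply is_lim_0plus_majorant_moment].
Qed.

End Left_half.

Lemma RL_right_half_bound al a b f df g G K A B : 0 < al -> a < b ->
  (forall x, a <= x <= b -> derivable_pt_lim f x (df x)) ->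
  (forall s, a <= s <= b -> Rabs (df s) <= ((b - s) * A + (s - a) * B) / (b - a)) ->
  (forall t, continuity_pt G t) ->
  (forall t, a <= t <= b -> g t = G t) ->
  (forall t, a <= t <= b -> Rabs (g t) <= K) ->
  exists Wg Wfg,
    is_RL_right_int al g ((a + b) / 2) b Wg /\
    is_RL_right_int al (fun t => f t * g t) ((a + b) / 2) b Wfg /\
    Rabs (f ((a + b) / 2) * Wg - Wfg) <= K * majorant_moment al B A ((b - a) / 2) ((b - a) / 2).
Proof.
  intros Hal Hab Hf Hdf HG HgG HgK.
  destruct (RL_left_half_bound al a b (fun t => f (a + b - t)) (fun t => - df (a + b - t))
              (fun t => g (a + b - t)) (fun t => G (a + b - t)) K B A)
    as [Wg [Wfg [H1 [H2 Hbound]]]]; auto.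
  - intros x Hx. replace (- df (a + b - x)) with (df (a + b - x) * (0 - 1)) by ring.
    apply (derivable_pt_lim_comp (fun t => a + b - t) f).
    + apply derivable_pt_lim_minus; [apply derivable_pt_lim_const | apply derivable_pt_lim_id].
    + apply Hf. lra.
  - intros s Hs. rewrite Rabs_Ropp. eapply Rle_trans; [apply Hdf; lra|]. right. field. lra.
  - intros t. apply (continuity_pt_comp (fun t => a + b - t) G); auto.
    apply continuity_pt_minus; [apply continuity_pt_const; now intros u v | apply continuity_pt_id].
  - intros t Ht. apply HgG. lra.
  - intros t Ht. apply HgK. lra.
  - exists Wg, Wfg. repeat split; try now apply is_RL_right_int_reflect.
    now replace ((a + b) / 2) with (a + b - (a + b) / 2) at 1 by field.
Qed.

Theorem theorem2p4 (I : R -> Prop) (f df g : R -> R) (a b al : R) :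
  is_interval I ->
  (forall x, interior I x -> derivable_pt_lim f x (df x)) ->
  interior I a -> interior I b -> a < b ->
  Defs.continuous_on g a b ->
  0 < al ->
  convex_on (fun x => Rabs (df x)) a b ->
  let m := (a + b) / 2 in
  Rabs (f m * (RL_left al g m a + RL_right al g m b)
        - (RL_left al (fun t => f t * g t) m a + RL_right al (fun t => f t * g t) m b))
  <= Rpower (b - a) (al + 1) * sup_norm g a b
       / (Rpower 2 (al + 1) * (al + 1) * Gamma (al + 1))
       * (Rabs (df a) + Rabs (df b)).
Proof.
  intros HI Hder Ha Hb Hab Hg Hal Hconv m.
  assert (Hf : forall x, a <= x <= b -> derivable_pt_lim f x (df x))
    by (intros x Hx; apply Hder, (interior_between I a b); auto).
  assert (Hdf := convex_on_le_chord _ a b Hab Hconv). simpl in Hdf.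
  destruct (continuous_on_extend g a b ltac:(lra) Hg) as [G [HG HgG]].
  assert (HgK := Rabs_le_sup_norm g a b G ltac:(lra) HG HgG).
  destruct (RL_left_half_bound al a b f df g G _ _ _ Hal Hab Hf Hdf HG HgG HgK) as [Vg [Vfg [HL1 [HL2 HL]]]].
  destruct (RL_right_half_bound al a b f df g G _ _ _ Hal Hab Hf Hdf HG HgG HgK) as [Wg [Wfg [HR1 [HR2 HR]]]].
  fold m in HL1, HL2, HL, HR1, HR2, HR.
  rewrite (RL_left_eq _ _ _ _ _ HL1), (RL_left_eq _ _ _ _ _ HL2),
    (RL_right_eq _ _ _ _ _ HR1), (RL_right_eq _ _ _ _ _ HR2), Gamma_succ by exact Hal.
  assert (HGa := Gamma_pos al Hal). set (h := (b - a) / 2) in *.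
  assert (Hpow : Rpower (b - a) (al + 1) = Rpower h (al + 1) * Rpower 2 (al + 1))
    by (rewrite Rpower_mult_distr by (unfold h; lra); f_equal; unfold h; field).
  assert (0 < Rpower 2 (al + 1)) by apply Rpower_pos.
  replace (f m * (/ Gamma al * Vg + / Gamma al * Wg) - (/ Gamma al * Vfg + / Gamma al * Wfg))
    with (/ Gamma al * ((f m * Vg - Vfg) + (f m * Wg - Wfg))) by ring.
  rewrite Rabs_mult, Rabs_right by (left; now apply Rinv_0_lt_compat).
  apply Rle_trans with (/ Gamma al * (sup_norm g a b * (majorant_moment al (Rabs (df a)) (Rabs (df b)) h h
                                         + majorant_moment al (Rabs (df b)) (Rabs (df a)) h h))).
  - apply Rmult_le_compat_l; [left; now apply Rinv_0_lt_compat|].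
    eapply Rle_trans; [apply Rabs_triang | lra].
  - right. rewrite majorant_moment_sym_sum, Hpow by (unfold h; lra). field. lra.
Qed.
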